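(* Let $a, b$ be integers with $0 < a \le b$ and let $L_{a,b} = \{C_{i,1} : 1 \le i \le a+1\} \cup \{C_{1,j} : 1 < j \le b+1\}$, of size $n = a+b+1$. Then on the $n \times n$ board, $2 \le \mathrm{cp}_{\mathrm{free}}(L_{a,b}) \le 5$.
   Context: For integers $i,j$, $C_{i,j}$ denotes the unit square cell in column $i$ and row $j$ of the integer grid (columns numbered left to right, rows numbered top to bottom). A polyomino is a finite set of cells; its size is its number of cells. For a polyomino $\mathcal{P}$ of size $n$ the board is $\mathbb{B} = \{C_{i,j} : 1 \le i,j \le n\}$. The shift of $\mathcal{P}$ by integers $(c,d)$ is $\mathcal{P}+(c,d) = \{C_{x+c,y+d} : C_{x,y} \in \mathcal{P}\}$. The rotations of $L_{a,b}$ by $90^\circ, 180^\circ, 270^\circ$ clockwise are $LR_{a,b} = \{C_{i,1} : 1 \le i \le b+1\} \cup \{C_{b+1,j} : 1 \le j \le a+1\}$, $LR^2_{a,b} = \{C_{i,b+1} : 1 \le i \le a+1\} \cup \{C_{a+1,j} : 1 \le j \le b+1\}$, $LR^3_{a,b} = \{C_{i,a+1} : 1 \le i \le b+1\} \cup \{C_{1,j} : 1 \le j \le a+1\}$ (reflections are not allowed). A free copy of $L_{a,b}$ is any shift of one of these four. A set of polyominoes is a valid arrangement if each is contained in $\mathbb{B}$ and they are pairwise disjoint. A free packing of $\mathcal{P}$ is a set of free copies of $\mathcal{P}$ forming a valid arrangement such that adding any further free copy of $\mathcal{P}$ yields an invalid arrangement. The clumsy free packing number $\mathrm{cp}_{\mathrm{free}}(\mathcal{P})$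 is the minimum number of polyominoes in a free packing of $\mathcal{P}$ on the $n \times n$ board. *)

From Stdlib Require Import ZArith List.
Import ListNotations.
Open Scope Z_scope.

(* A cell C_{i,j} (column i, row j) is the pair (i, j). *)
Definition cell := (Z * Z)%type.
Definition poly := cell -> Prop.

(* L_{a,b} and its clockwise rotations, transcribed from the paper. *)
Definition Lab (a b : Z) : poly := fun z =>
  let (i, j) := z in (j = 1 /\ 1 <= i <= a + 1) \/ (i = 1 /\ 1 < j <= b + 1).
Definition LR (a b : Z) : poly := fun z =>
  let (i, j) := z in (j = 1 /\ 1 <= i <= b + 1) \/ (i = b + 1 /\ 1 <= j <= a + 1).
Definition LR2 (a b : Z) : poly := fun z =>
  let (i, j) := z in (j = b + 1 /\ 1 <= i <= a + 1) \/ (i = a + 1 /\ 1 <= j <= b + 1).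
Definition LR3 (a b : Z) : poly := fun z =>
  let (i, j) := z in (j = a + 1 /\ 1 <= i <= b + 1) \/ (i = 1 /\ 1 <= j <= a + 1).

Definition shift (P : poly) (c d : Z) : poly := fun z =>
  let (u, v) := z in P (u - c, v - d).

Definition free_copy (a b : Z) (Q : poly) : Prop :=
  exists (R : poly) (c d : Z),
    (R = Lab a b \/ R = LR a b \/ R = LR2 a b \/ R = LR3 a b) /\
    (forall z, Q z <-> shift R c d z).

Definition board (n : Z) : poly := fun z =>
  let (i, j) := z in 1 <= i <= n /\ 1 <= j <= n.

Definition empty_poly : poly := fun _ => False.

Definition valid_arrangement (n : Z) (Ps : list poly) : Prop :=
  (forall P, In P Ps -> forall z, P z -> board n z) /\
  (forall i j : nat, i <> j -> (i < length Ps)%nat -> (j < length Ps)%nat ->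
     forall z, ~ (nth i Ps empty_poly z /\ nth j Ps empty_poly z)).

Definition free_packing (a b n : Z) (Ps : list poly) : Prop :=
  Forall (free_copy a b) Ps /\
  valid_arrangement n Ps /\
  (forall Q, free_copy a b Q -> ~ valid_arrangement n (Ps ++ [Q])).

Definition is_cp_free (a b n : Z) (k : nat) : Prop :=
  (exists Ps, free_packing a b n Ps /\ length Ps = k) /\
  (forall Ps, free_packing a b n Ps -> (k <= length Ps)%nat).

(* A free copy of L_{a,b} is a shift of one of its four rotations, and it fits in the board
   exactly when the shift keeps its bounding box inside.  A family is therefore maximal as soon
   as, for each rotation and each admissible shift, some cell of the family lies in the new
   copy: linear arithmetic in the shift.  Maximal packings with 2, 3 and 4 copies exist for
   b = a, a < b <= 2a and 2a <= b respectively.  Conversely a single copy is never maximal: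
   for each of its rotations there are two admissible placements of a new copy, and it cannot
   meet both. *)

From Stdlib Require Import ZArith List Lia Classical Wf_nat.
Import ListNotations.
Open Scope Z_scope.

Definition fits (n : Z) (P : poly) : Prop := forall z, P z -> board n z.

Definition disjoint (P Q : poly) : Prop := forall z, P z -> Q z -> False.

Lemma disjoint_sym (P Q : poly) : disjoint P Q -> disjoint Q P.
Proof. intros H z HQ HP. exact (H z HP HQ). Qed.

Lemma disjoint_one_of (P Q1 Q2 : poly) :
  (forall z1 z2, P z1 -> Q1 z1 -> P z2 -> Q2 z2 -> False) ->
  disjoint P Q1 \/ disjoint P Q2.
Proof.
  intros Hboth. destruct (classic (disjoint P Q1)) as [H1 | H1]; [left | right].
  - exact H1.
  - intros z2 HP2 HQ2. apply H1. intros z1 HP1 HQ1. exact (Hboth z1 z2 HP1 HQ1 HP2 HQ2).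
Qed.

Lemma valid_arrangement_nil (n : Z) : valid_arrangement n [].
Proof. split; [intros P [] | intros i j _ Hi; simpl in Hi; lia]. Qed.

Lemma valid_arrangement_cons (n : Z) (P : poly) (Ps : list poly) :
  valid_arrangement n (P :: Ps) <->
  fits n P /\ Forall (disjoint P) Ps /\ valid_arrangement n Ps.
Proof.
  split.
  - intros [Hfit Hdisj]. split; [|split; [|split]].
    + exact (Hfit P (or_introl eq_refl)).
    + apply Forall_forall. intros Q HQ z HPz HQz.
      destruct (In_nth Ps Q empty_poly HQ) as (k & Hk & HkQ).
      apply (Hdisj 0%nat (S k) ltac:(lia) ltac:(simpl; lia) ltac:(simpl; lia) z).
      simpl. rewrite HkQ. auto.
    + intros Q HQ. apply Hfit. right. exact HQ.
    + intros i j Hij Hi Hj. apply (Hdisj (S i) (S j)); simpl; lia.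
  - intros (HPfit & HPdisj & HPsfit & HPsdisj). rewrite Forall_forall in HPdisj. split.
    + intros Q [<- | HQ]; [exact HPfit | exact (HPsfit Q HQ)].
    + intros [|i] [|j] Hij Hi Hj z [Hzi Hzj]; simpl in *.
      * lia.
      * apply (HPdisj (nth j Ps empty_poly)) with z; [apply nth_In; lia | exact Hzi | exact Hzj].
      * apply (HPdisj (nth i Ps empty_poly)) with z; [apply nth_In; lia | exact Hzj | exact Hzi].
      * apply (HPsdisj i j ltac:(lia) ltac:(lia) ltac:(lia) z). auto.
Qed.

Lemma valid_arrangement_iff (n : Z) (Ps : list poly) :
  valid_arrangement n Ps <-> Forall (fits n) Ps /\ ForallOrdPairs disjoint Ps.
Proof.
  induction Ps as [|P Ps IH].
  - split; [split; constructor | intros _; apply valid_arrangement_nil].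
  - rewrite valid_arrangement_cons, IH, Forall_cons_iff. split.
    + intros (HP & Hdisj & HPs & Hpairs). split; [split | constructor]; assumption.
    + intros [[HP HPs] Hpairs]. inversion Hpairs. auto.
Qed.

Lemma valid_arrangement_snoc (n : Z) (Ps : list poly) (Q : poly) :
  valid_arrangement n (Ps ++ [Q]) <->
  valid_arrangement n Ps /\ fits n Q /\ Forall (disjoint Q) Ps.
Proof.
  induction Ps as [|P Ps IH]; simpl.
  - rewrite valid_arrangement_cons.
    pose proof (valid_arrangement_nil n). intuition.
  - rewrite !valid_arrangement_cons, IH, Forall_app, !Forall_cons_iff.
    intuition (auto using disjoint_sym).
Qed.

Inductive rotation := rot0 | rot90 | rot180 | rot270.

Definition rotate (r : rotation) (a b : Z) : poly :=
  match r with
  | rot0 => Lab a b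
  | rot90 => LR a b
  | rot180 => LR2 a b
  | rot270 => LR3 a b
  end.

Definition width (r : rotation) (a b : Z) : Z :=
  match r with rot0 | rot180 => a + 1 | rot90 | rot270 => b + 1 end.

Definition height (r : rotation) (a b : Z) : Z :=
  match r with rot0 | rot180 => b + 1 | rot90 | rot270 => a + 1 end.

Ltac unfold_cells :=
  cbv beta iota delta [rotate width height shift Lab LR LR2 LR3 board fits disjoint] in *.

Lemma free_copy_rotate (a b : Z) (r : rotation) (c d : Z) :
  free_copy a b (shift (rotate r a b) c d).
Proof.
  exists (rotate r a b), c, d. split; [|tauto].
  destruct r; simpl; tauto.
Qed.

Lemma free_copy_inv (a b : Z) (Q : poly) :
  free_copy a b Q ->
  exists r c d, forall z, Q z <-> shift (rotate r a b) c d z.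
Proof.
  intros (R & c & d & HR & HQ).
  destruct HR as [-> | [-> | [-> | ->]]];
    [exists rot0 | exists rot90 | exists rot180 | exists rot270]; eauto.
Qed.

Lemma fits_shift_rotate (n a b : Z) (r : rotation) (c d : Z) :
  0 <= a -> 0 <= b ->
  fits n (shift (rotate r a b) c d) <->
  0 <= c /\ c + width r a b <= n /\ 0 <= d /\ d + height r a b <= n.
Proof.
  intros Ha Hb. split.
  - intros Hfit.
    pose proof (Hfit (c + 1, d + 1)). pose proof (Hfit (c + width r a b, d + 1)).
    pose proof (Hfit (c + 1, d + height r a b)).
    pose proof (Hfit (c + width r a b, d + height r a b)).
    destruct r; unfold_cells; lia.
  - intros Hbox [x y]. destruct r; unfold_cells; lia.
Qed.

Definition blocked (a b n : Z) (Ps : list poly) : Prop :=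
  forall r c d, fits n (shift (rotate r a b) c d) ->
    ~ Forall (disjoint (shift (rotate r a b) c d)) Ps.

Lemma free_packing_of_blocked (a b n : Z) (Ps : list poly) :
  Forall (free_copy a b) Ps -> valid_arrangement n Ps -> blocked a b n Ps ->
  free_packing a b n Ps.
Proof.
  intros Hcopies Hvalid Hblocked. split; [exact Hcopies | split; [exact Hvalid |]].
  intros Q HQ. destruct (free_copy_inv a b Q HQ) as (r & c & d & HQrot).
  rewrite valid_arrangement_snoc. intros (_ & Hfit & Hdisj).
  apply (Hblocked r c d).
  - intros z Hz. apply Hfit, HQrot, Hz.
  - refine (Forall_impl _ _ Hdisj). intros P HQP z Hz. apply HQP, HQrot, Hz.
Qed.

Definition packing2 (a : Z) : list poly :=
  [shift (rotate rot0 a a) (a - 1) 0; shift (rotate rot0 a a) a a].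

Lemma packing2_free_packing (a : Z) : 0 < a -> free_packing a a (a + a + 1) (packing2 a).
Proof.
  intros Ha. apply free_packing_of_blocked.
  - repeat constructor; apply free_copy_rotate.
  - apply valid_arrangement_iff. split; repeat constructor; intros [x y]; unfold_cells; lia.
  - intros r c d Hfit Hdisj. apply fits_shift_rotate in Hfit; [|lia..].
    unfold packing2 in Hdisj. rewrite !Forall_cons_iff in Hdisj. destruct Hdisj as (D1 & D2 & _).
    (* Each listed cell lies in a piece; for every admissible shift one of them lies in the copy. *)
    destruct r.
    + pose proof (D1 (a, d + 1)). pose proof (D2 (c + 1, a + d + 1)). unfold_cells; lia.
    + pose proof (D2 (a + c + 1, a + 1)). unfold_cells; lia.
    + pose proof (D2 (a + c + 1, a + 1)). unfold_cells; lia.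
    + pose proof (D2 (a + 1, a + d + 1)). unfold_cells; lia.
Qed.

Definition packing3 (a b : Z) : list poly :=
  [shift (rotate rot0 a b) b a; shift (rotate rot180 a b) (b - a - 1) 1;
   shift (rotate rot0 a b) (a - 1) 0].

Lemma packing3_free_packing (a b : Z) :
  0 < a < b -> b <= 2 * a -> free_packing a b (a + b + 1) (packing3 a b).
Proof.
  intros Hab Hb. apply free_packing_of_blocked.
  - repeat constructor; apply free_copy_rotate.
  - apply valid_arrangement_iff. split; repeat constructor; intros [x y]; unfold_cells; lia.
  - intros r c d Hfit Hdisj. apply fits_shift_rotate in Hfit; [|lia..].
    unfold packing3 in Hdisj. rewrite !Forall_cons_iff in Hdisj.
    destruct Hdisj as (D1 & D2 & D3 & _).
    destruct r.
    + pose proof (D1 (c + 1, b + d + 1)). pose proof (D2 (c + 1, b + 2)).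
      pose proof (D3 (a, d + 1)). pose proof (D3 (c + 1, d + 1)). unfold_cells; lia.
    + pose proof (D1 (b + c + 1, a + d + 1)). pose proof (D2 (b, d + 1)). unfold_cells; lia.
    + pose proof (D1 (a + c + 1, a + 1)). pose proof (D2 (a + c + 1, b + 2)).
      pose proof (D3 (a + c + 1, d + 1)). unfold_cells; lia.
    + pose proof (D1 (b + 1, a + d + 1)). unfold_cells; lia.
Qed.

Definition packing4 (a b : Z) : list poly :=
  [shift (rotate rot270 a b) a (b - a + 1); shift (rotate rot0 a b) (a - 1) a;
   shift (rotate rot90 a b) 0 (a - 1); shift (rotate rot180 a b) (b - a + 1) 0].

Lemma packing4_free_packing (a b : Z) :
  0 < a -> 2 * a <= b -> free_packing a b (a + b + 1) (packing4 a b).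
Proof.
  intros Ha Hb. apply free_packing_of_blocked.
  - repeat constructor; apply free_copy_rotate.
  - apply valid_arrangement_iff. split; repeat constructor; intros [x y]; unfold_cells; lia.
  - intros r c d Hfit Hdisj. apply fits_shift_rotate in Hfit; [|lia..].
    unfold packing4 in Hdisj. rewrite !Forall_cons_iff in Hdisj.
    destruct Hdisj as (D1 & D2 & D3 & D4 & _).
    destruct r.
    + pose proof (D1 (c + 1, b + 2)). pose proof (D2 (a + c + 1, d + 1)).
      pose proof (D3 (c + 1, a)). unfold_cells; lia.
    + pose proof (D2 (a, d + 1)). pose proof (D3 (b + c + 1, a + d + 1)).
      pose proof (D4 (b + 2, d + 1)). unfold_cells; lia.
    + pose proof (D1 (a + c + 1, b + 2)). pose proof (D3 (a + c + 1, a)).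
      pose proof (D4 (c + 1, b + d + 1)). unfold_cells; lia.
    + pose proof (D1 (c + 1, d + 1)). pose proof (D2 (a, a + d + 1)).
      pose proof (D4 (b + 2, a + d + 1)). unfold_cells; lia.
Qed.

Lemma exists_free_packing_length_le4 (a b : Z) :
  0 < a <= b -> exists Ps, free_packing a b (a + b + 1) Ps /\ (length Ps <= 4)%nat.
Proof.
  intros Hab. destruct (Z.eq_dec a b) as [<- | Hne].
  - exists (packing2 a). split; [apply packing2_free_packing; lia | simpl; lia].
  - destruct (Z_le_gt_dec b (2 * a)).
    + exists (packing3 a b). split; [apply packing3_free_packing; lia | simpl; lia].
    + exists (packing4 a b). split; [apply packing4_free_packing; lia | simpl; lia].
Qed.

Lemma blocked_of_free_packing (a b n : Z) (Ps : list poly) :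
  free_packing a b n Ps -> blocked a b n Ps.
Proof.
  intros (_ & Hvalid & Hmax) r c d Hfit Hdisj.
  apply (Hmax _ (free_copy_rotate a b r c d)).
  apply valid_arrangement_snoc. auto.
Qed.

Lemma not_blocked_of_one_of (a b n : Z) (P : poly) (r1 r2 : rotation) (c1 d1 c2 d2 : Z) :
  fits n (shift (rotate r1 a b) c1 d1) -> fits n (shift (rotate r2 a b) c2 d2) ->
  (forall z1 z2, P z1 -> shift (rotate r1 a b) c1 d1 z1 ->
                 P z2 -> shift (rotate r2 a b) c2 d2 z2 -> False) ->
  ~ blocked a b n [P].
Proof.
  intros Hfit1 Hfit2 Hboth Hblk.
  destruct (disjoint_one_of _ _ _ Hboth) as [D | D];
    [apply (Hblk r1 c1 d1 Hfit1) | apply (Hblk r2 c2 d2 Hfit2)];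
    repeat constructor; apply disjoint_sym, D.
Qed.

Lemma single_copy_not_blocked (a b : Z) (r : rotation) (c d : Z) :
  0 < a <= b -> fits (a + b + 1) (shift (rotate r a b) c d) ->
  ~ blocked a b (a + b + 1) [shift (rotate r a b) c d].
Proof.
  intros Hab Hfit. apply fits_shift_rotate in Hfit; [|lia..].
  destruct r;
    [ apply (not_blocked_of_one_of _ _ _ _ rot180 rot0 b a (a - 1) (a - 1))
    | apply (not_blocked_of_one_of _ _ _ _ rot270 rot90 0 b a (a - 1))
    | apply (not_blocked_of_one_of _ _ _ _ rot0 rot180 0 0 a a)
    | apply (not_blocked_of_one_of _ _ _ _ rot90 rot270 a 0 (a - 1) a) ];
    solve [ apply fits_shift_rotate; simpl; lia
          | intros [x1 y1] [x2 y2]; unfold_cells; lia ].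
Qed.

Lemma free_packing_length_ge2 (a b : Z) (Ps : list poly) :
  0 < a <= b -> free_packing a b (a + b + 1) Ps -> (2 <= length Ps)%nat.
Proof.
  intros Hab Hpack. pose proof (blocked_of_free_packing a b _ Ps Hpack) as Hblk.
  destruct Hpack as (Hcopies & Hvalid & _).
  destruct Ps as [| P [| P' Ps]]; simpl; [exfalso.. | lia].
  - apply (Hblk rot0 0 0); [apply fits_shift_rotate; simpl; lia | constructor].
  - inversion Hcopies as [| ? ? HP]. destruct (free_copy_inv a b P HP) as (r & c & d & HProt).
    apply valid_arrangement_cons in Hvalid as (Hfit & _).
    apply (single_copy_not_blocked a b r c d Hab).
    + intros z Hz. apply Hfit, HProt, Hz.
    + intros r' c' d' Hfit' Hdisj. apply (Hblk r' c' d' Hfit').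
      inversion Hdisj as [| ? ? HQ]. repeat constructor.
      intros z HQz HPz. apply (HQ z HQz), HProt, HPz.
Qed.

Lemma is_cp_free_of_free_packing (a b n : Z) (Ps : list poly) :
  free_packing a b n Ps -> exists k, is_cp_free a b n k /\ (k <= length Ps)%nat.
Proof.
  intros Hpack.
  pose (is_size k := exists Qs, free_packing a b n Qs /\ length Qs = k).
  destruct (dec_inh_nat_subset_has_unique_least_element is_size) as (k & (Hk & Hleast) & _).
  - intros k. apply classic.
  - exists (length Ps), Ps. auto.
  - exists k. split.
    + split; [exact Hk | intros Qs HQs; apply Hleast; exists Qs; auto].
    + apply Hleast. exists Ps. auto.
Qed.

Theorem theorem5 (a b : Z) (hab : 0 < a <= b) :
  exists k : nat, is_cp_free a b (a + b + 1) k /\ (2 <= k <= 5)%nat.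
Proof.
  destruct (exists_free_packing_length_le4 a b hab) as (Ps & Hpack & Hlen).
  destruct (is_cp_free_of_free_packing a b _ Ps Hpack) as (k & Hk & Hle).
  exists k. split; [exact Hk |].
  destruct Hk as [(Qs & HQs & <-) _].
  pose proof (free_packing_length_ge2 a b Qs hab HQs). lia.
Qed.
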